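(* Let $N\ge 2$ and let $(\nu_r^{(1:N)})_{r\ge1}$ be vectors of non-negative integers with $\sum_i \nu_r^{(i)} = N$, with $c_N$, $D_N$, $\tau_N$ as defined below, and assume $\tau_N(u)<\infty$ for all $u\ge0$. Fix $t > 0$ and $l \in \mathbb{N}$. Then for any constant $B > 0$, $$\sum_{\substack{s_1,\dots,s_l=1\\\text{all distinct}}}^{\tau_N(t)}\prod_{j=1}^l\big[c_N(s_j) - BD_N(s_j)\big] \geq \sum_{\substack{s_1,\dots,s_l=1\\\text{all distinct}}}^{\tau_N(t)}\prod_{j=1}^l c_N(s_j) - \Bigg(\sum_{s=1}^{\tau_N(t)} D_N(s)\Bigg)(t+1)^{l-1}(1+B)^l.$$
   Context: $(x)_k$ is the falling factorial. $c_N(r) := \frac{1}{(N)_2}\sum_{i=1}^N(\nu_r^{(i)})_2$; $D_N(r) := \frac{1}{N(N)_2}\sum_{i=1}^N(\nu_r^{(i)})_2\{\nu_r^{(i)} + \frac1N\sum_{j\ne i}(\nu_r^{(j)})^2\}$; $\tau_N(u) := \inf\{s\in\{0,1,2,\dots\} : \sum_{r=1}^s c_N(r) \ge u\}$. *)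

From HB Require Import structures.
From mathcomp Require Import all_boot all_order all_algebra.
From mathcomp Require Import boolp reals.
Set Implicit Arguments. Unset Strict Implicit. Unset Printing Implicit Defensive.
Import Order.TTheory GRing.Theory Num.Theory.
Local Open Scope ring_scope.

(* nu r i = nu_r^{(i+1)}, for r >= 1 and i : 'I_N.  (x)_2 = x ^_ 2 (falling factorial). *)

Definition cN (R : realType) (N : nat) (nu : nat -> 'I_N -> nat) (r : nat) : R :=
  (((N ^_ 2)%N)%:R)^-1 * \sum_(i < N) (((nu r i) ^_ 2)%N)%:R.

Definition DN (R : realType) (N : nat) (nu : nat -> 'I_N -> nat) (r : nat) : R :=
  ((N%:R * ((N ^_ 2)%N)%:R)^-1) *
  \sum_(i < N) (((nu r i) ^_ 2)%N)%:R *
     ((nu r i)%:R + (N%:R)^-1 * \sum_(j < N | j != i) ((nu r j)%:R) ^+ 2).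

Definition csum (R : realType) (N : nat) (nu : nat -> 'I_N -> nat) (s : nat) : R :=
  \sum_(1 <= r < s.+1) cN R nu r.

(* tau_N(u) = inf {s in N : \sum_{r=1}^s c_N(r) >= u}; defined as 0 if the set is empty
   (this case is excluded by the hypotheses of the theorem). *)
Definition tauN (R : realType) (N : nat) (nu : nat -> 'I_N -> nat) (u : R) : nat :=
  match pselect (exists s, (fun s : nat => u <= csum R nu s) s) with
  | left h => ex_minn h
  | right _ => 0%N
  end.

(* sum over l-tuples (s_1,...,s_l) of pairwise distinct elements of {1,...,T}
   of \prod_j f(s_j); the tuple is an injective map 'I_l -> 'I_T, shifted by one. *)
Definition distinct_sum (R : realType) (T l : nat) (f : nat -> R) : R :=
  \sum_(s : {ffun 'I_l -> 'I_T} | injectiveb s) \prod_(j < l) f (s j).+1.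

(* Write a_s = c_N(s), d_s = D_N(s) and T = tau_N(t).  For s >= 1 one has
   0 <= d_s <= a_s <= 1, so the minimality of T gives a_1 + ... + a_T <= t + 1.
   Expanding prod_j (a_j - B d_j) over the sets J of positions that pick the
   factor -B d_j, the defect prod_j a_j - prod_j (a_j - B d_j) of a tuple is at
   most the sum over nonempty J of prod_(j in J) B d_j * prod_(j notin J) a_j.
   These terms are nonnegative, so summing over distinct tuples is bounded by
   summing over all tuples, which factorises as (B D)^|J| A^(l - |J|) with
   D = d_1 + ... + d_T <= A = a_1 + ... + a_T <= t + 1.  As J is nonempty this
   is at most D (t + 1)^(l - 1) B^|J|, and the B^|J| sum to (1 + B)^l. *)

From HB Require Import structures.
From mathcomp Require Import all_boot all_order all_algebra.
From mathcomp Require Import boolp reals.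
From mathcomp Require Import lra zify.
Import Order.TTheory GRing.Theory Num.Theory.
Set Implicit Arguments.
Unset Strict Implicit.
Unset Printing Implicit Defensive.

Local Open Scope ring_scope.

Section ProductExpansion.
Variables (R : realDomainType) (I : finType).

Lemma prod_sub_prod_le (a b : I -> R) :
  \prod_i a i - \prod_i (a i - b i) <=
  \sum_(J : {set I} | J != set0) \prod_i (if i \in J then `|b i| else `|a i|).
Proof.
under [\prod_i (a i - b i)]eq_bigr do rewrite addrC.
rewrite bigA_distr (bigD1 set0) //=.
under [\prod_i (if _ \in set0 then _ else _)]eq_bigr do rewrite in_set0.
rewrite opprD addrA subrr add0r; apply: le_trans (ler_norm _) _; rewrite normrN.
apply: le_trans (ler_norm_sum _ _ _) _; apply: ler_sum => J _.
by rewrite normr_prod; under eq_bigr do rewrite (fun_if Num.norm) normrN.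
Qed.

Lemma sum_set_prod_if (x : R) :
  \sum_(J : {set I}) \prod_i (if i \in J then x else 1) = (1 + x) ^+ #|I|.
Proof. by rewrite -bigA_distr prodr_const addrC. Qed.

Lemma sum_ffun_prod_if (K : finType) (J : {set I}) (f g : K -> R) :
  \sum_(s : {ffun I -> K}) \prod_i (if i \in J then f (s i) else g (s i)) =
  \prod_i (if i \in J then \sum_k f k else \sum_k g k).
Proof.
transitivity (\prod_i \sum_k if i \in J then f k else g k).
  by rewrite bigA_distr_bigA.
by apply: eq_bigr => i _; case: (i \in J).
Qed.

Lemma prod_if_le (J : {set I}) (b x y c : R) : J != set0 ->
  0 <= b -> 0 <= x <= c -> 0 <= y <= c ->
  \prod_i (if i \in J then b * x else y) <=
  x * c ^+ #|I|.-1 * \prod_i (if i \in J then b else 1).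
Proof.
case/set0Pn=> k kJ b_ge0 /andP[x_ge0 xc] /andP[y_ge0 yc].
rewrite (bigD1 k) // [X in _ <= _ * X](bigD1 k) //= kJ.
rewrite mulrCA !mulrA -[leRHS]mulrA; apply: ler_wpM2l; first exact: mulr_ge0.
rewrite -(cardC1 k) -prodrMl; apply: ler_prod => i _.
case: (i \in J); last by rewrite mulr1 y_ge0.
by rewrite mulr_ge0 //= [c * b]mulrC; apply: ler_wpM2l.
Qed.

End ProductExpansion.

Section DistinctSum.
Variable R : realType.

Lemma distinct_sum_sub_ge (T l : nat) (a d : nat -> R) (B C : R) :
  0 <= B -> (forall i : 'I_T, 0 <= d i.+1 <= a i.+1) -> \sum_(i < T) a i.+1 <= C ->
  distinct_sum T l a - (\sum_(i < T) d i.+1) * C ^+ l.-1 * (1 + B) ^+ l <=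
  distinct_sum T l (fun s => a s - B * d s).
Proof.
move=> B_ge0 da sum_a_le.
set D := \sum_(i < T) d i.+1; set A := \sum_(i < T) a i.+1.
have a_ge0 (i : 'I_T) : 0 <= a i.+1 by have /andP[/le_trans] := da i; apply.
have D_le : 0 <= D <= C.
  rewrite sumr_ge0 => [|i _]; last by case/andP: (da i).
  by apply: le_trans sum_a_le; apply: ler_sum => i _; case/andP: (da i).
have A_le : 0 <= A <= C by rewrite sum_a_le sumr_ge0.
pose E (s : {ffun 'I_l -> 'I_T}) (J : {set 'I_l}) :=
  \prod_(j < l) (if j \in J then B * d (s j : 'I_T).+1 else a (s j).+1).
have E_ge0 s J : 0 <= E s J.
  by apply: prodr_ge0 => j _; case: ifP => _; rewrite ?mulr_ge0 //; case/andP: (da (s j)).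
have step (s : {ffun 'I_l -> 'I_T}) :
    \prod_(j < l) a (s j).+1 - \prod_(j < l) (a (s j).+1 - B * d (s j).+1) <=
    \sum_(J : {set 'I_l} | J != set0) E s J.
  apply: le_trans (prod_sub_prod_le (fun j => a (s j).+1) (fun j => B * d (s j).+1)) _.
  apply: ler_sum => J _.
  apply: ler_prod => j _; case: ifP => _; rewrite normr_ge0 //= ger0_norm //.
  by rewrite mulr_ge0 //; case/andP: (da (s j)).
suff: \sum_(s : {ffun 'I_l -> 'I_T}) \sum_(J : {set 'I_l} | J != set0) E s J <=
    D * C ^+ l.-1 * (1 + B) ^+ l.
  move=> bound; rewrite lerBlDr -lerBlDl /distinct_sum -sumrB.
  apply: le_trans bound; apply: le_trans (ler_sum _ (fun s _ => step s)) _.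
  rewrite [leLHS]big_mkcond /=; apply: ler_sum => s _.
  by case: ifP => // _; apply: sumr_ge0.
rewrite exchange_big /=.
have sum_E J : \sum_s E s J = \prod_(j < l) (if j \in J then B * D else A).
  by rewrite (sum_ffun_prod_if J (fun i : 'I_T => B * d i.+1) (fun i => a i.+1)) -mulr_sumr.
under eq_bigr do rewrite sum_E.
apply: le_trans (ler_sum _ (fun J J0 => prod_if_le J0 B_ge0 D_le A_le)) _.
rewrite card_ord -mulr_sumr; apply: ler_wpM2l.
  by rewrite mulr_ge0 ?exprn_ge0 //; case/andP: D_le => D_ge0 /(le_trans D_ge0).
rewrite -[in X in _ <= X](card_ord l) -sum_set_prod_if [leRHS](bigD1 set0) //= lerDr.
by apply: prodr_ge0 => j _; rewrite in_set0.
Qed.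

End DistinctSum.

Lemma sum_sqr_leq_sqr_sum (I : finType) (P : pred I) (F : I -> nat) :
  (\sum_(i | P i) F i ^ 2 <= (\sum_(i | P i) F i) ^ 2)%N.
Proof.
rewrite [X in (_ <= X)%N]expnS expn1 big_distrl /=; apply: leq_sum => i Pi.
by rewrite expnS expn1 leq_mul2l (bigD1 i) //= leq_addr orbT.
Qed.

Section CoalescentRates.
Variables (R : realType) (N : nat) (nu : nat -> 'I_N -> nat).
Hypothesis N_ge2 : (2 <= N)%N.
Hypothesis sum_nu : forall r, (1 <= r)%N -> (\sum_(i < N) nu r i)%N = N.

Lemma DN_ge0 r : 0 <= DN R nu r.
Proof.
rewrite mulr_ge0 ?invr_ge0 ?mulr_ge0 ?sumr_ge0 // => i _.
by rewrite mulr_ge0 ?addr_ge0 ?mulr_ge0 ?invr_ge0 ?sumr_ge0 // => j _; rewrite sqr_ge0.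
Qed.

Lemma nu_leq r i : (1 <= r)%N -> (nu r i <= N)%N.
Proof. by move=> r_ge1; rewrite -(sum_nu r_ge1) (bigD1 i) //= leq_addr. Qed.

Lemma cN_le1 r : (1 <= r)%N -> cN R nu r <= 1.
Proof.
move=> r_ge1; have N2_gt0 : (0 < N ^_ 2)%N by rewrite ffact_gt0.
rewrite /cN -natr_sum ler_pdivrMl ?ltr0n // mulr1 ler_nat.
rewrite [X in (_ <= X)%N]ffactnS ffactn1 -[X in (X * _)%N](sum_nu r_ge1) big_distrl.
apply: leq_sum => i _; rewrite ffactnS ffactn1 leq_mul2l.
by rewrite -!subn1 leq_sub2r ?nu_leq ?orbT.
Qed.

Lemma DN_term_le r i : (1 <= r)%N ->
  (nu r i)%:R + N%:R^-1 * \sum_(j < N | j != i) ((nu r j)%:R) ^+ 2 <= N%:R :> R.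
Proof.
move=> r_ge1; have N_gt0 : 0 < N%:R :> R by rewrite ltr0n; case: N N_ge2.
have key : (N * nu r i + \sum_(j < N | j != i) nu r j ^ 2 <= N * N)%N.
  have := sum_sqr_leq_sqr_sum (fun j => j != i) (nu r).
  have := sum_nu r_ge1; rewrite (bigD1 i) //=.
  set S := (\sum_(j < N | j != i) nu r j)%N.
  set Q := (\sum_(j < N | j != i) nu r j ^ 2)%N.
  (* Q <= S ^ 2 = (N - nu r i) ^ 2 <= N * (N - nu r i) *)
  nia.
rewrite -(ler_pM2l N_gt0) mulrDr mulrA mulfV ?gt_eqF // mul1r.
by move: key; rewrite -(ler_nat R) natrD !natrM natr_sum; under eq_bigr do rewrite natrX.
Qed.

Lemma DN_le_cN r : (1 <= r)%N -> DN R nu r <= cN R nu r.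
Proof.
move=> r_ge1; have N_gt0 : 0 < N%:R :> R by rewrite ltr0n; case: N N_ge2.
rewrite /DN /cN invfM [_^-1 * _^-1]mulrC -mulrA ler_wpM2l ?invr_ge0 //.
rewrite ler_pdivrMl // mulr_sumr ler_sum // => i _.
by rewrite [X in _ <= X]mulrC ler_wpM2l ?DN_term_le.
Qed.

Lemma csum_tauN_le (u : R) : 0 <= u -> (exists s, u <= csum R nu s) ->
  csum R nu (tauN nu u) <= u + 1.
Proof.
move=> u_ge0 ex_s; rewrite /tauN; case: pselect => // {}ex_s.
case: ex_minnP => [[|m] _ minimal]; first by rewrite /csum big_geq //; lra.
have lt_u : csum R nu m < u by rewrite ltNge; apply/negP => /minimal; rewrite ltnn.
by rewrite /csum big_nat_recr //=; have := cN_le1 (ltn0Sn m); rewrite /csum in lt_u; lra.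
Qed.

End CoalescentRates.

Theorem lemma6 (R : realType) (N : nat) (nu : nat -> 'I_N -> nat)
  (hN : (2 <= N)%N)
  (hsum : forall r : nat, (1 <= r)%N -> (\sum_(i < N) nu r i)%N = N)
  (hfin : forall u : R, 0 <= u -> exists s : nat, u <= csum R nu s)
  (t : R) (ht : 0 < t) (l : nat) (B : R) (hB : 0 < B) :
  distinct_sum (tauN nu t) l (fun s => cN R nu s - B * DN R nu s) >=
  distinct_sum (tauN nu t) l (fun s => cN R nu s)
  - (\sum_(1 <= s < (tauN nu t).+1) DN R nu s) * (t + 1) ^+ (l.-1) * (1 + B) ^+ l.
Proof.
have sum_c : \sum_(i < tauN nu t) cN R nu i.+1 <= t + 1.
  have := csum_tauN_le hN hsum (ltW ht) (hfin t (ltW ht)).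
  by rewrite /csum big_add1 big_mkord.
have d_le_c (i : 'I_(tauN nu t)) : 0 <= DN R nu i.+1 <= cN R nu i.+1.
  by rewrite DN_ge0 DN_le_cN.
rewrite big_add1 big_mkord; exact: distinct_sum_sub_ge (ltW hB) d_le_c sum_c.
Qed.
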